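(* For integers $n\ge 1$ and $m$ with $1<m<\sqrt{2n}$, $E_m\!\left[\frac1\ell\right]<\frac{1}{E_{m-1}[\ell]}$.
   Context: $\mathbf X=\{X_1,\dots,X_n\}$ with the uniform measure. For $1\le m\le n$, $\mathcal X_m$ is the set of finite sequences $\chi=(\chi_1,\dots,\chi_\ell)$ of elements of $\mathbf X$ having exactly $m$ distinct entries and with $\chi_\ell$ different from all earlier entries; $\ell(\chi)$ is its length and $\chi$ has probability $n^{-\ell(\chi)}$. $E_m[f]=\sum_{\chi\in\mathcal X_m}f(\chi)\,n^{-\ell(\chi)}$; in particular $E_{m-1}[\ell]=\sum_{j=0}^{m-2}\frac n{n-j}$. *)

From Stdlib Require Import Reals List Arith.
Import ListNotations.
Open Scope R_scope.

(* The alphabet X = {X_1,...,X_n} is encoded as {0,...,n-1}. *)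

Fixpoint all_seqs (n L : nat) : list (list nat) :=
  match L with
  | O => [ [] ]
  | S L' => flat_map (fun s => map (fun x => x :: s) (seq 0 n)) (all_seqs n L')
  end.

Definition n_distinct (s : list nat) : nat := length (nodup Nat.eq_dec s).

Definition last_new (s : list nat) : bool :=
  match rev s with
  | [] => false
  | x :: r => negb (existsb (Nat.eqb x) r)
  end.

Definition inXm (m : nat) (s : list nat) : bool :=
  Nat.eqb (n_distinct s) m && last_new s.

Definition Eterm (n m : nat) (f : list nat -> R) (L : nat) : R :=
  fold_right Rplus 0
    (map (fun s => f s * / (INR n ^ L)) (filter (inXm m) (all_seqs n L))).

Definition E_is (n m : nat) (f : list nat -> R) (v : R) : Prop :=
  infinite_sum (Eterm n m f) v.

Definition ell (s : list nat) : R := INR (length s).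

From Stdlib Require Import Reals List Lia Lra Permutation.
Import ListNotations.
Open Scope R_scope.

(** Let [occ n L k] be the probability that a uniform random word of length [L]
    over the [n]-letter alphabet has exactly [k] distinct letters.  Appending a
    letter gives the recurrence
      [occ (L+1) (k+1) = (k+1)/n occ L (k+1) + (n-k)/n occ L k],
    and the words of [X_(j+1)] of length [L+1] have total probability
    [first_hit j L = (n-j)/n occ L j], the chance that the [j+1]-st new letter
    first appears at position [L+1].  These first-hit probabilities telescope
    against the cumulative probabilities [at_most j L = sum_(i<=j) occ L i].
    - Since words of [X_m] have length at least [m], and length [m+1] with
      positive probability, [E_m[1/l] < 1/m].
    - Summing by parts, [E_(m-1)[l]] is at most the expected time spent with at
      most [m-2] distinct letters, [sum_(i<=m-2) n/(n-i)], which is at most [m]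
      as soon as [(m-2)(m-1) <= 2(n-m+2)], in particular when [m^2 < 2n].
    Hence [E_m[1/l] < 1/m <= 1/E_(m-1)[l]]. *)

Section ListSums.
Variable A : Type.

Definition sumL (l : list A) (f : A -> R) : R := fold_right Rplus 0 (map f l).

Lemma sumL_cons a l f : sumL (a :: l) f = f a + sumL l f.
Proof. reflexivity. Qed.

Lemma sumL_app l1 l2 f : sumL (l1 ++ l2) f = sumL l1 f + sumL l2 f.
Proof.
  induction l1 as [|a l1 IH]; simpl app; [unfold sumL; simpl; lra|].
  rewrite !sumL_cons, IH; lra.
Qed.

Lemma sumL_ext_in l f g : (forall a, In a l -> f a = g a) -> sumL l f = sumL l g.
Proof.
  induction l as [|a l IH]; intros H; [reflexivity|].
  rewrite !sumL_cons, H, IH; auto with datatypes.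
Qed.

Lemma sumL_plus l f g : sumL l (fun a => f a + g a) = sumL l f + sumL l g.
Proof. induction l as [|a l IH]; [unfold sumL; simpl; lra|]. rewrite !sumL_cons, IH; lra. Qed.

Lemma sumL_scal l c f : sumL l (fun a => c * f a) = c * sumL l f.
Proof. induction l as [|a l IH]; [unfold sumL; simpl; lra|]. rewrite !sumL_cons, IH; lra. Qed.

Lemma sumL_const l c : sumL l (fun _ => c) = c * INR (length l).
Proof.
  induction l as [|a l IH]; [unfold sumL; simpl; lra|].
  rewrite sumL_cons, IH, length_cons, S_INR; lra.
Qed.

Lemma sumL_filter (p : A -> bool) l f :
  sumL (filter p l) f = sumL l (fun a => if p a then f a else 0).
Proof.
  induction l as [|a l IH]; [reflexivity|]. simpl filter.
  rewrite (sumL_cons a l). destruct (p a); rewrite ?sumL_cons, IH; lra.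
Qed.

Lemma sumL_nonneg l f : (forall a, In a l -> 0 <= f a) -> 0 <= sumL l f.
Proof.
  induction l as [|a l IH]; intros H; [unfold sumL; simpl; lra|].
  rewrite sumL_cons. pose proof (H a (in_eq a l)). pose proof (IH (fun b Hb => H b (in_cons a b l Hb))).
  lra.
Qed.

End ListSums.

Arguments sumL {A}.

Lemma sumL_swap {A B} (l1 : list A) (l2 : list B) F :
  sumL l1 (fun a => sumL l2 (fun b => F a b)) = sumL l2 (fun b => sumL l1 (fun a => F a b)).
Proof.
  induction l1 as [|a l1 IH].
  - rewrite (sumL_ext_in _ l2 _ (fun _ => 0)) by reflexivity.
    rewrite sumL_const; unfold sumL; simpl; lra.
  - rewrite sumL_cons, IH, <- sumL_plus. reflexivity.
Qed.

Lemma sumL_flat_map {A B} (g : A -> list B) l f :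
  sumL (flat_map g l) f = sumL l (fun a => sumL (g a) f).
Proof.
  induction l as [|a l IH]; [reflexivity|].
  simpl flat_map. rewrite sumL_app, sumL_cons, IH. reflexivity.
Qed.

Lemma sumL_map {A B} (g : A -> B) l f : sumL (map g l) f = sumL l (fun a => f (g a)).
Proof. unfold sumL. rewrite map_map. reflexivity. Qed.

Lemma all_seqs_In n L s :
  In s (all_seqs n L) -> length s = L /\ Forall (fun x => (x < n)%nat) s.
Proof.
  revert s; induction L as [|L IH]; intros s H; simpl in H.
  - destruct H as [<-|[]]. split; auto.
  - apply in_flat_map in H as [t [Ht H]]. apply in_map_iff in H as [x [<- Hx]].
    apply in_seq in Hx. destruct (IH t Ht). split; simpl; [lia|]. constructor; auto; lia.
Qed.

Lemma sum_all_seqs_cons n L f :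
  sumL (all_seqs n (S L)) f =
  sumL (all_seqs n L) (fun s => sumL (seq 0 n) (fun x => f (x :: s))).
Proof. simpl all_seqs. rewrite sumL_flat_map. apply sumL_ext_in; intros. apply sumL_map. Qed.

Lemma sum_all_seqs_snoc n L f :
  sumL (all_seqs n (S L)) f =
  sumL (all_seqs n L) (fun s => sumL (seq 0 n) (fun x => f (s ++ [x]))).
Proof.
  rewrite sum_all_seqs_cons. revert f; induction L as [|L IH]; intros f; [reflexivity|].
  rewrite !sum_all_seqs_cons, (IH (fun u => sumL (seq 0 n) (fun x => f (x :: u)))).
  apply sumL_ext_in; intros t _. apply sumL_swap.
Qed.

Lemma n_distinct_cons x s :
  n_distinct (x :: s) = if in_dec Nat.eq_dec x s then n_distinct s else S (n_distinct s).
Proof. unfold n_distinct. simpl. destruct (in_dec Nat.eq_dec x s); reflexivity. Qed.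

Lemma n_distinct_snoc_new x s : ~ In x s -> n_distinct (s ++ [x]) = S (n_distinct s).
Proof.
  induction s as [|a s IH]; intros H; [reflexivity|].
  simpl app. rewrite !n_distinct_cons.
  assert (Hs : ~ In x s) by (intro; apply H; right; auto).
  destruct (in_dec Nat.eq_dec a (s ++ [x])) as [i|i];
  destruct (in_dec Nat.eq_dec a s) as [j|j]; rewrite ?IH by auto; auto.
  - apply in_app_or in i as [i|[i|[]]]; [contradiction|subst; exfalso; apply H; left; auto].
  - exfalso; apply i; apply in_or_app; auto.
Qed.

Lemma last_new_snoc s x : last_new (s ++ [x]) = if in_dec Nat.eq_dec x s then false else true.
Proof.
  unfold last_new. rewrite rev_unit.
  destruct (in_dec Nat.eq_dec x s) as [i|i]; simpl.
  - replace (existsb (Nat.eqb x) (rev s)) with true; auto.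
    symmetry; apply existsb_exists. exists x.
    split; [apply (in_rev s); exact i| apply Nat.eqb_refl].
  - destruct (existsb (Nat.eqb x) (rev s)) eqn:E; auto.
    apply existsb_exists in E as [y [Hy Hxy]]. apply Nat.eqb_eq in Hxy; subst.
    exfalso; apply i. apply in_rev; auto.
Qed.

Lemma count_letters_in n s : Forall (fun y => (y < n)%nat) s ->
  length (filter (fun x => if in_dec Nat.eq_dec x s then true else false) (seq 0 n))
  = n_distinct s.
Proof.
  intros Hs. unfold n_distinct. apply Permutation_length, NoDup_Permutation.
  - apply NoDup_filter, seq_NoDup.
  - apply NoDup_nodup.
  - intros x. rewrite filter_In, nodup_In, in_seq. split.
    + intros [_ H]. destruct in_dec; congruence.
    + intros H. rewrite Forall_forall in Hs. specialize (Hs x H). split; [lia|].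
      destruct in_dec; tauto.
Qed.

Lemma sum_letters_in_or_not n s a b : Forall (fun y => (y < n)%nat) s ->
  sumL (seq 0 n) (fun x => if in_dec Nat.eq_dec x s then a else b) =
  a * INR (n_distinct s) + b * (INR n - INR (n_distinct s)).
Proof.
  intros Hs. rewrite <- (count_letters_in n s Hs).
  rewrite (sumL_ext_in _ _ _
    (fun x => b + (a - b) * (if (fun x => if in_dec Nat.eq_dec x s then true else false) x
                             then 1 else 0))) by (intros; destruct in_dec; lra).
  rewrite sumL_plus, sumL_scal, sumL_const, <- sumL_filter, sumL_const, length_seq. lra.
Qed.

Definition distinct_ind (k : nat) (s : list nat) : R :=
  if Nat.eqb (n_distinct s) k then 1 else 0.

Definition occ (n L k : nat) : R := sumL (all_seqs n L) (distinct_ind k) / INR n ^ L.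

Section Occupancy.
Variable n : nat.
Hypothesis hn : (1 <= n)%nat.

Let n_pos : 0 < INR n.
Proof. apply lt_0_INR; lia. Qed.

Let pow_n_pos L : 0 < INR n ^ L.
Proof. apply pow_lt, n_pos. Qed.

Lemma occ_nonneg L k : 0 <= occ n L k.
Proof.
  unfold occ, Rdiv. apply Rmult_le_pos.
  - apply sumL_nonneg. intros; unfold distinct_ind; destruct Nat.eqb; lra.
  - left; apply Rinv_0_lt_compat, pow_n_pos.
Qed.

Lemma occ_0 k : occ n 0 k = if Nat.eqb 0 k then 1 else 0.
Proof. unfold occ, distinct_ind, sumL. simpl. destruct (Nat.eqb 0 k); lra. Qed.

Lemma occ_succ_zero L : occ n (S L) 0 = 0.
Proof.
  unfold occ. rewrite sum_all_seqs_cons.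
  rewrite (sumL_ext_in _ _ _ (fun _ => 0 * INR (length (seq 0 n)))).
  - rewrite sumL_const. lra.
  - intros s _. rewrite <- sumL_const. apply sumL_ext_in. intros x _.
    unfold distinct_ind, n_distinct. destruct (nodup Nat.eq_dec (x :: s)) eqn:E; [|reflexivity].
    pose proof (proj2 (nodup_In Nat.eq_dec (x :: s) x) (in_eq x s)) as Hx.
    rewrite E in Hx. destruct Hx.
Qed.

(* A letter appended to a word with [j+1] distinct letters is old with
   probability [(j+1)/n]; one appended to a word with [j] is new with
   probability [(n-j)/n]. *)
Lemma occ_succ L j :
  occ n (S L) (S j) = INR (S j) / INR n * occ n L (S j) + (INR n - INR j) / INR n * occ n L j.
Proof.
  unfold occ. rewrite sum_all_seqs_cons.
  rewrite (sumL_ext_in _ _ _ (fun s => INR (S j) * distinct_ind (S j) s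
                                       + (INR n - INR j) * distinct_ind j s)).
  - rewrite sumL_plus, !sumL_scal. simpl pow. pose proof (pow_n_pos L). field. lra.
  - intros s Hs. apply all_seqs_In in Hs as [_ Hs].
    rewrite (sumL_ext_in _ _ _ (fun x => if in_dec Nat.eq_dec x s then distinct_ind (S j) s
                                        else distinct_ind j s)).
    + rewrite sum_letters_in_or_not by exact Hs. unfold distinct_ind.
      destruct (Nat.eqb_spec (n_distinct s) (S j)) as [E|E];
      destruct (Nat.eqb_spec (n_distinct s) j) as [E'|E']; try lia;
        rewrite ?E, ?E'; lra.
    + intros x _. unfold distinct_ind. rewrite n_distinct_cons.
      destruct in_dec; reflexivity.
Qed.

Lemma occ_vanish L j : (L < j)%nat -> occ n L j = 0.
Proof.
  revert j; induction L as [|L IH]; intros j H.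
  - rewrite occ_0. destruct (Nat.eqb_spec 0 j); [lia|reflexivity].
  - destruct j as [|j]; [lia|]. rewrite occ_succ, !IH by lia. lra.
Qed.

Lemma occ_pos L k : (k <= L)%nat -> (k <= n)%nat -> (0 < k \/ L = 0)%nat -> 0 < occ n L k.
Proof.
  revert k; induction L as [|L IH]; intros k HkL Hkn Hk.
  - replace k with 0%nat by lia. rewrite occ_0. simpl. lra.
  - destruct k as [|k]; [lia|]. rewrite occ_succ.
    assert (Hk' : INR k < INR n) by (apply lt_INR; lia).
    assert (0 <= INR (S k) / INR n * occ n L (S k)).
    { apply Rmult_le_pos; [apply Rlt_le, Rdiv_lt_0_compat; [apply lt_0_INR; lia|exact n_pos]|].
      apply occ_nonneg. }
    assert (0 <= (INR n - INR k) / INR n * occ n L k).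
    { apply Rmult_le_pos; [apply Rlt_le, Rdiv_lt_0_compat; lra|apply occ_nonneg]. }
    assert (Hcase : (0 < k \/ L = 0)%nat \/ (k = 0 /\ 1 <= L)%nat) by lia.
    destruct Hcase as [Hk0|[-> HL]].
    + assert (0 < (INR n - INR k) / INR n * occ n L k).
      { apply Rmult_lt_0_compat; [apply Rdiv_lt_0_compat; lra|apply IH; lia]. }
      lra.
    + assert (0 < INR 1 / INR n * occ n L 1).
      { apply Rmult_lt_0_compat; [apply Rdiv_lt_0_compat; simpl; lra|apply IH; lia]. }
      lra.
Qed.

(* [first_hit n j L] is the probability that the [j+1]-st distinct letter
   first appears at position [L+1]: [j] distinct letters among the first [L],
   and then one of the [n-j] unseen letters. *)
Definition first_hit (j L : nat) : R := (INR n - INR j) / INR n * occ n L j.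

Lemma first_hit_nonneg j L : (j <= n)%nat -> 0 <= first_hit j L.
Proof.
  intros Hj. apply le_INR in Hj. unfold first_hit.
  apply Rmult_le_pos; [|apply occ_nonneg].
  unfold Rdiv. apply Rmult_le_pos; [lra|left; apply Rinv_0_lt_compat, n_pos].
Qed.

Lemma Eterm_0 k f : Eterm n k f 0 = 0.
Proof. unfold Eterm. simpl. unfold inXm. rewrite Bool.andb_false_r. reflexivity. Qed.

Lemma Eterm_succ j f phi L : (forall s, f s = phi (length s)) ->
  Eterm n (S j) f (S L) = phi (S L) * first_hit j L.
Proof.
  intros Hf. unfold Eterm. fold (sumL (filter (inXm (S j)) (all_seqs n (S L)))
                                   (fun s => f s * / INR n ^ S L)).
  rewrite sumL_filter, sum_all_seqs_snoc.
  rewrite (sumL_ext_in _ _ _ (fun s => phi (S L) / INR n ^ S L * (INR n - INR j)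
                                       * distinct_ind j s)).
  - rewrite sumL_scal. unfold first_hit, occ. simpl pow.
    pose proof (pow_n_pos L). field. lra.
  - intros s Hs. apply all_seqs_In in Hs as [Hl Hs].
    rewrite (sumL_ext_in _ _ _ (fun x => if in_dec Nat.eq_dec x s then 0
                                        else distinct_ind j s * (phi (S L) / INR n ^ S L))).
    + rewrite sum_letters_in_or_not by exact Hs. unfold distinct_ind.
      destruct (Nat.eqb_spec (n_distinct s) j) as [E|E]; [rewrite E|]; lra.
    + intros x _. unfold inXm. rewrite last_new_snoc. destruct in_dec as [i|i].
      * rewrite Bool.andb_false_r. reflexivity.
      * rewrite Bool.andb_true_r, n_distinct_snoc_new by exact i. simpl Nat.eqb.
        unfold distinct_ind. rewrite Hf, length_app, Hl, Nat.add_1_r.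
        destruct Nat.eqb; lra.
Qed.

Definition at_most (j L : nat) : R := sum_f_R0 (occ n L) j.

Lemma at_most_0 j : at_most j 0 = 1.
Proof.
  induction j as [|j IH]; unfold at_most in *; simpl sum_f_R0; rewrite occ_0; simpl; [lra|].
  rewrite IH; lra.
Qed.

Lemma at_most_nonneg j L : 0 <= at_most j L.
Proof. apply cond_pos_sum. intros; apply occ_nonneg. Qed.

(* One more letter leaves the count at most [j] unless it is a first hit. *)
Lemma at_most_succ j L : at_most j (S L) = at_most j L - first_hit j L.
Proof.
  unfold first_hit. induction j as [|j IH]; unfold at_most in *; simpl sum_f_R0.
  - rewrite occ_succ_zero. simpl INR. field. lra.
  - rewrite IH, occ_succ, S_INR. field. lra.
Qed.

(* The first-hit probabilities telescope, so their sum is at most one. *)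
Lemma first_hit_partial_sum j N : sum_f_R0 (first_hit j) N = 1 - at_most j (S N).
Proof.
  induction N as [|N IH]; simpl sum_f_R0.
  - rewrite at_most_succ, at_most_0. lra.
  - rewrite IH, (at_most_succ j (S N)). lra.
Qed.

Lemma first_hit_partial_sum_le j N : sum_f_R0 (first_hit j) N <= 1.
Proof. rewrite first_hit_partial_sum. pose proof (at_most_nonneg j (S N)). lra. Qed.

(* The expected waiting time at [i] distinct letters is at most [n/(n-i)]. *)
Lemma occ_partial_sum_le i N : (i < n)%nat ->
  sum_f_R0 (fun L => occ n L i) N <= INR n / (INR n - INR i).
Proof.
  intros Hi. apply lt_INR in Hi.
  assert (Hsum : (INR n - INR i) / INR n * sum_f_R0 (fun L => occ n L i) N
                 = sum_f_R0 (first_hit i) N).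
  { rewrite scal_sum. apply sum_eq. intros; unfold first_hit; ring. }
  pose proof (first_hit_partial_sum_le i N) as Hle.
  apply (Rmult_le_reg_l ((INR n - INR i) / INR n)); [apply Rdiv_lt_0_compat; lra|].
  rewrite Hsum. replace ((INR n - INR i) / INR n * (INR n / (INR n - INR i))) with 1
    by (field; lra). exact Hle.
Qed.

Definition waiting_bound (j : nat) : R := sum_f_R0 (fun i => INR n / (INR n - INR i)) j.

Lemma at_most_partial_sum_le j N : (j < n)%nat ->
  sum_f_R0 (at_most j) N <= waiting_bound j.
Proof.
  induction j as [|j IH]; intros Hj.
  - unfold waiting_bound, at_most. simpl. apply occ_partial_sum_le, Hj.
  - unfold waiting_bound. cbn [sum_f_R0]. fold (waiting_bound j).
    rewrite (sum_eq _ (fun L => at_most j L + occ n L (S j))) by reflexivity.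
    rewrite sum_plus. pose proof (IH ltac:(lia)). pose proof (occ_partial_sum_le (S j) N Hj).
    lra.
Qed.

End Occupancy.

Lemma partial_sum_ge_term (t : nat -> R) k : (forall i, 0 <= t i) -> t k <= sum_f_R0 t k.
Proof.
  intros Ht. destruct k as [|k]; simpl; [lra|].
  pose proof (cond_pos_sum t k Ht). lra.
Qed.

Lemma nonneg_series_ge_term (t : nat -> R) l k :
  (forall i, 0 <= t i) -> infinite_sum t l -> t k <= l.
Proof.
  intros Ht Hl. apply (Rle_trans _ (sum_f_R0 t k)); [apply partial_sum_ge_term, Ht|].
  apply growing_ineq; [|exact Hl]. intros N. simpl. pose proof (Ht (S N)). lra.
Qed.

Lemma nonneg_series_bounded (t : nat -> R) c :
  (forall k, 0 <= t k) -> (forall N, sum_f_R0 t N <= c) ->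
  exists l, infinite_sum t l /\ l <= c.
Proof.
  intros Ht Hc. destruct (growing_cv (sum_f_R0 t)) as [l Hl].
  - intros N. simpl. pose proof (Ht (S N)). lra.
  - exists c. intros x [N ->]. apply Hc.
  - exists l. split; [exact Hl|].
    apply (Rle_cv_lim (Vn := fun _ => c) Hc Hl).
    intros eps Heps. exists 0%nat. intros. unfold Rdist. rewrite Rminus_diag, Rabs_R0. lra.
Qed.

Lemma series_minus (t v : nat -> R) a b :
  infinite_sum t a -> infinite_sum v b -> infinite_sum (fun k => v k - t k) (b - a).
Proof.
  intros Ha Hb eps Heps. destruct (CV_minus _ _ _ _ Hb Ha eps Heps) as [N HN].
  exists N. intros k Hk. rewrite minus_sum. exact (HN k Hk).
Qed.

Lemma series_lt (t v : nat -> R) a b k0 :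
  (forall k, t k <= v k) -> t k0 < v k0 ->
  infinite_sum t a -> infinite_sum v b -> a < b.
Proof.
  intros Hle Hlt Ha Hb.
  assert (H := nonneg_series_ge_term (fun k => v k - t k) (b - a) k0).
  assert (Hd : forall k, 0 <= v k - t k) by (intros k; pose proof (Hle k); lra).
  specialize (H Hd (series_minus t v a b Ha Hb)). simpl in H. lra.
Qed.

Lemma waiting_bound_estimate n j : (j < n)%nat ->
  waiting_bound n j <= INR (S j) + INR j * INR (S j) / (2 * (INR n - INR j)).
Proof.
  induction j as [|j IH]; intros Hj.
  - unfold waiting_bound. simpl. assert (0 < INR n) by (apply lt_0_INR; lia).
    replace (INR n / (INR n - 0)) with 1 by (field; lra). lra.
  - unfold waiting_bound. cbn [sum_f_R0]. fold (waiting_bound n j).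
    specialize (IH ltac:(lia)).
    assert (Hjn : INR (S j) < INR n) by (apply lt_INR; exact Hj).
    pose proof (pos_INR j) as Hj0.
    rewrite !S_INR in *. set (x := INR n - (INR j + 1)) in *.
    assert (Hx : 0 < x) by (unfold x; lra).
    replace (INR n - INR j) with (x + 1) in IH by (unfold x; lra).
    replace (INR n / x) with (1 + (INR j + 1) / x) by (unfold x; field; lra).
    assert (INR j * (INR j + 1) / (2 * (x + 1)) <= INR j * (INR j + 1) / (2 * x)).
    { unfold Rdiv. apply Rmult_le_compat_l; [nra|]. apply Rinv_le_contravar; lra. }
    assert (INR j * (INR j + 1) / (2 * x) + (INR j + 1) / x
            = (INR j + 1) * (INR j + 1 + 1) / (2 * x)) by (field; lra).
    lra.
Qed.

(* [E_(j+1)[1/l] < 1/(j+1)]: the length of a word of [X_(j+1)] is at least [j+1],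
   and exceeds it with positive probability. *)
Lemma E_inv_length_lt n j : (1 <= n)%nat -> (1 <= j)%nat -> (j < n)%nat ->
  exists a, E_is n (S j) (fun s => / ell s) a /\ a < / INR (S j).
Proof.
  intros Hn Hj Hjn.
  set (t := Eterm n (S j) (fun s => / ell s)).
  set (v := fun k => match k with O => 0 | S L => / INR (S j) * first_hit n j L end).
  assert (Hinv : 0 < / INR (S j)) by (apply Rinv_0_lt_compat, lt_0_INR; lia).
  assert (Hfh : forall L, 0 <= first_hit n j L) by (intros; apply (first_hit_nonneg n Hn); lia).
  assert (tS : forall L, t (S L) = / INR (S L) * first_hit n j L)
    by (intros L; apply (Eterm_succ n Hn j _ (fun k => / INR k)); reflexivity).
  assert (Hv : forall k, 0 <= v k).
  { intros [|L]; [simpl; lra|]. change (0 <= / INR (S j) * first_hit n j L).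
    apply Rmult_le_pos; [lra|apply Hfh]. }
  assert (Htv : forall k, t k <= v k).
  { intros [|L]; [unfold t; rewrite Eterm_0; simpl; lra|]. rewrite tS. change (v (S L)) with (/ INR (S j) * first_hit n j L).
    destruct (Nat.lt_ge_cases L j) as [HL|HL].
    - unfold first_hit. rewrite (occ_vanish n Hn) by exact HL. lra.
    - apply Rmult_le_compat_r; [apply Hfh|]. apply Rinv_le_contravar; [apply lt_0_INR; lia|].
      apply le_INR; lia. }
  assert (Ht : forall k, 0 <= t k) by (intros [|L]; [unfold t; rewrite Eterm_0; lra|];
    rewrite tS; apply Rmult_le_pos; [left; apply Rinv_0_lt_compat, lt_0_INR; lia|apply Hfh]).
  assert (Hvsum : forall N, sum_f_R0 v N <= / INR (S j)).
  { intros [|N]; [change (0 <= / INR (S j)); lra|].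
    rewrite decomp_sum by lia. simpl pred. change (v 0%nat) with 0.
    replace (sum_f_R0 (fun i => v (S i)) N) with (/ INR (S j) * sum_f_R0 (first_hit n j) N).
    - pose proof (first_hit_partial_sum_le n Hn j N). nra.
    - rewrite scal_sum. apply sum_eq. intros i _. unfold v. ring. }
  destruct (nonneg_series_bounded v _ Hv Hvsum) as [b [Hb Hb1]].
  destruct (nonneg_series_bounded t (/ INR (S j)) Ht) as [a [Ha _]].
  { intros N. apply (Rle_trans _ (sum_f_R0 v N)); [apply sum_Rle; auto|apply Hvsum]. }
  exists a. split; [exact Ha|].
  assert (Hstrict : t (S (S j)) < v (S (S j))).
  { rewrite tS. change (v (S (S j))) with (/ INR (S j) * first_hit n j (S j)).
    apply Rmult_lt_compat_r.
    - unfold first_hit. apply Rmult_lt_0_compat.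
      + apply Rdiv_lt_0_compat; [|apply lt_0_INR; lia]. apply lt_INR in Hjn. lra.
      + apply (occ_pos n Hn); lia.
    - apply Rinv_lt_contravar; [apply Rmult_lt_0_compat; apply lt_0_INR; lia|].
      apply lt_INR; lia. }
  pose proof (series_lt t v a b _ Htv Hstrict Ha Hb). lra.
Qed.

(* [E_(j+1)[l] <= j+2] when [j(j+1) <= 2(n-j)]: summing by parts, the series
   is bounded by the expected time spent with at most [j] distinct letters. *)
Lemma E_length_le n j : (1 <= n)%nat -> (j < n)%nat ->
  INR j * INR (S j) <= 2 * (INR n - INR j) ->
  exists b, E_is n (S j) ell b /\ 0 < b /\ b <= INR (S (S j)).
Proof.
  intros Hn Hjn Hq.
  assert (Hjn' : INR j < INR n) by (apply lt_INR; exact Hjn).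
  set (t := Eterm n (S j) ell).
  assert (t0 : t 0%nat = 0) by apply Eterm_0.
  assert (tS : forall L, t (S L) = INR (S L) * first_hit n j L)
    by (intros L; apply (Eterm_succ n Hn j _ INR); reflexivity).
  assert (Ht : forall k, 0 <= t k).
  { intros [|L]; [lra|]. rewrite tS.
    apply Rmult_le_pos; [apply pos_INR|apply (first_hit_nonneg n Hn); lia]. }
  assert (Hparts : forall N, sum_f_R0 t (S N)
                   = sum_f_R0 (at_most n j) N - INR (S N) * at_most n j (S N)).
  { induction N as [|N IH].
    - cbn [sum_f_R0]. rewrite t0, tS, (at_most_succ n Hn j 0). simpl INR. ring.
    - rewrite tech5, IH, tech5, tS, (at_most_succ n Hn j (S N)), (S_INR (S N)). ring. }
  assert (Hwait : waiting_bound n j <= INR (S (S j))).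
  { pose proof (waiting_bound_estimate n j Hjn).
    assert (INR j * INR (S j) / (2 * (INR n - INR j)) <= 1).
    { apply (Rmult_le_reg_r (2 * (INR n - INR j))); [lra|].
      unfold Rdiv. rewrite Rmult_assoc, Rinv_l by lra. lra. }
    rewrite (S_INR (S j)). lra. }
  destruct (nonneg_series_bounded t (INR (S (S j))) Ht) as [b [Hb Hb1]].
  { intros [|N]; [cbn [sum_f_R0]; rewrite t0; apply pos_INR|]. rewrite Hparts.
    pose proof (at_most_partial_sum_le n Hn j N Hjn).
    pose proof (Rmult_le_pos _ _ (pos_INR (S N)) (at_most_nonneg n Hn j (S N))). lra. }
  exists b. split; [exact Hb|]. split; [|exact Hb1].
  apply (Rlt_le_trans _ (t (S j))); [|apply nonneg_series_ge_term; assumption].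
  rewrite tS. apply Rmult_lt_0_compat; [apply lt_0_INR; lia|].
  unfold first_hit. apply Rmult_lt_0_compat; [apply Rdiv_lt_0_compat; [lra|apply lt_0_INR; lia]|].
  apply (occ_pos n Hn); lia.
Qed.

Lemma lt_sqrt_double_nat n m : INR m < sqrt (2 * INR n) -> (m * m < 2 * n)%nat.
Proof.
  intros Hm. apply INR_lt. rewrite !mult_INR. change (INR 2) with 2.
  pose proof (pos_INR m). pose proof (pos_INR n). pose proof (sqrt_pos (2 * INR n)).
  pose proof (sqrt_sqrt (2 * INR n) ltac:(lra)). nra.
Qed.

Theorem mainTheorem7 (n m : nat) (hn : (1 <= n)%nat) (hm1 : (1 < m)%nat)
  (hm2 : INR m < sqrt (2 * INR n)) :
  exists a b : R,
    E_is n m (fun s => / ell s) a /\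
    E_is n (m - 1) ell b /\
    a < / b.
Proof.
  pose proof (lt_sqrt_double_nat n m hm2) as Hmn.
  destruct m as [|[|j]]; [lia|lia|].
  replace (S (S j) - 1)%nat with (S j) by lia.
  destruct (E_inv_length_lt n (S j) hn ltac:(lia) ltac:(nia)) as [a [Ha Ha_lt]].
  assert (Hq : INR j * INR (S j) <= 2 * (INR n - INR j)).
  { assert (Hnat : (j * S j + 2 * j <= 2 * n)%nat) by nia.
    apply le_INR in Hnat. rewrite plus_INR, !mult_INR in Hnat. change (INR 2) with 2 in Hnat.
    lra. }
  destruct (E_length_le n j hn ltac:(nia) Hq) as [b [Hb [Hb_pos Hb_le]]].
  exists a, b. split; [exact Ha|]. split; [exact Hb|].
  pose proof (Rinv_le_contravar _ _ Hb_pos Hb_le). lra.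
Qed.
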